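(* Let $\Re_1,\Re_2$ be commutative Krasner hyperrings with identity, $\Re=\Re_1\times\Re_2$, $\varphi_i$ a hyperideal reduction and $\gamma_i$ a hyperideal expansion on $L(\Re_i)$ ($i=1,2$), and define $\phi(N_1\times N_2)=\varphi_1(N_1)\times\varphi_2(N_2)$ and $\delta(N_1\times N_2)=\gamma_1(N_1)\times\gamma_2(N_2)$. Then $N$ is a $\phi$-$\delta$-primary hyperideal of $\Re$ in each of the following cases: (i) $N=N_1\times N_2$ where each $N_i$ is a proper hyperideal of $\Re_i$ with $\varphi_i(N_i)=N_i$; (ii) $N=N_1\times\Re_2$ where $N_1$ is a $\gamma_1$-primary hyperideal of $\Re_1$; (iii) $N=\Re_1\times N_2$ where $N_2$ is a $\gamma_2$-primary hyperideal of $\Re_2$; (iv) $N=N_1\times\Re_2$ where $N_1$ is a $\varphi_1$-$\gamma_1$-primary hyperideal of $\Re_1$ and $\varphi_2(\Re_2)=\Re_2$; (v) $N=\Re_1\times N_2$ where $N_2$ is a $\varphi_2$-$\gamma_2$-primary hyperideal of $\Re_2$ and $\varphi_1(\Re_1)=\Re_1$.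
   Context: Krasner hyperring: $(\Re,\oplus)$ canonical hypergroup, $(\Re,\circ)$ commutative semigroup with identity $1\neq0$ and $0$ absorbing, $\circ$ distributive over $\oplus$. Hyperideals: nonempty $N$ with $a\oplus(-b)\subseteq N$, $r\circ a\in N$; $L(\Re)$ the set of hyperideals. $\Re_1\times\Re_2$ has componentwise operations; every hyperideal of it has the form $N_1\times N_2$ with $N_i$ a hyperideal of $\Re_i$ (a product with $\emptyset$ is $\emptyset$). A hyperideal reduction is $\phi:L(\Re)\to L(\Re)\cup\{\emptyset\}$ with $\phi(N)\subseteq N$ and $N\subseteq M\Rightarrow\phi(N)\subseteq\phi(M)$; an expansion is $\delta:L(\Re)\to L(\Re)$ with $N\subseteq\delta(N)$ and monotone. A proper hyperideal $N$ is $\phi$-$\delta$-primary if $a\circ b\in N$, $a\circ b\notin\phi(N)$ imply $a\in N$ or $b\in\delta(N)$; it is $\delta$-primary if $a\circ b\in N$ implies $a\in N$ or $b\in\delta(N)$. *)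

From Stdlib Require Import Setoid.
Set Implicit Arguments.

(** * Commutative Krasner hyperrings with identity.
    A set-valued hyperaddition a ⊕ b is encoded by its membership relation:
    [hadd a b c] means  c ∈ a ⊕ b.  Subsets are predicates [car -> Prop]. *)
Record KHR := {
  car :> Type;
  hadd : car -> car -> car -> Prop;
  zero : car;
  one : car;
  neg : car -> car;
  mul : car -> car -> car;
  hadd_nonempty : forall a b, exists c, hadd a b c;
  hadd_assoc : forall a b c x,
      (exists y, hadd a b y /\ hadd y c x) <-> (exists y, hadd b c y /\ hadd a y x);
  hadd_comm : forall a b c, hadd a b c <-> hadd b a c;
  hadd_zero : forall a c, hadd zero a c <-> c = a;
  hadd_neg : forall a, hadd a (neg a) zero;
  neg_unique : forall a b, hadd a b zero -> b = neg a;
  hadd_rev : forall a b c, hadd a b c -> hadd (neg a) c b;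
  mul_assoc : forall a b c, mul a (mul b c) = mul (mul a b) c;
  mul_comm : forall a b, mul a b = mul b a;
  mul_one : forall a, mul one a = a;
  one_neq_zero : one <> zero;
  mul_zero : forall a, mul zero a = zero;
  (* distributivity: a ∘ (b ⊕ c) = (a∘b) ⊕ (a∘c) *)
  mul_distr : forall a b c x,
      (exists y, hadd b c y /\ x = mul a y) <-> hadd (mul a b) (mul a c) x
}.

Arguments hadd {k}. Arguments zero {k}. Arguments one {k}.
Arguments neg {k}. Arguments mul {k}.
Arguments hadd_nonempty {k}. Arguments hadd_assoc {k}. Arguments hadd_comm {k}.
Arguments hadd_zero {k}. Arguments hadd_neg {k}. Arguments neg_unique {k}.
Arguments hadd_rev {k}. Arguments mul_assoc {k}. Arguments mul_comm {k}.
Arguments mul_one {k}. Arguments one_neq_zero {k}. Arguments mul_zero {k}.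
Arguments mul_distr {k}.

Definition subset {T : Type} (A B : T -> Prop) := forall x, A x -> B x.
Definition set_eq {T : Type} (A B : T -> Prop) := forall x, A x <-> B x.
Definition setT {T : Type} : T -> Prop := fun _ => True.
Definition setX {T1 T2 : Type} (A : T1 -> Prop) (B : T2 -> Prop) : T1 * T2 -> Prop :=
  fun x => A (fst x) /\ B (snd x).

Section Notions.
Variable R : KHR.

Definition hyperideal (N : R -> Prop) : Prop :=
  (exists x, N x) /\
  (forall a b c, N a -> N b -> hadd a (neg b) c -> N c) /\
  (forall r a, N a -> N (mul r a)).

Definition proper (N : R -> Prop) : Prop := exists x, ~ N x.

Definition is_empty (N : R -> Prop) : Prop := forall x, ~ N x.

Definition hred (phi : (R -> Prop) -> (R -> Prop)) : Prop :=
  (forall N, hyperideal N -> hyperideal (phi N) \/ is_empty (phi N)) /\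
  (forall N, hyperideal N -> subset (phi N) N) /\
  (forall N M, hyperideal N -> hyperideal M -> subset N M -> subset (phi N) (phi M)).

Definition hexp (delta : (R -> Prop) -> (R -> Prop)) : Prop :=
  (forall N, hyperideal N -> hyperideal (delta N)) /\
  (forall N, hyperideal N -> subset N (delta N)) /\
  (forall N M, hyperideal N -> hyperideal M -> subset N M -> subset (delta N) (delta M)).

Definition phi_delta_primary (phi delta : (R -> Prop) -> (R -> Prop)) (N : R -> Prop) : Prop :=
  hyperideal N /\ proper N /\
  forall a b, N (mul a b) -> ~ phi N (mul a b) -> N a \/ delta N b.

Definition delta_primary (delta : (R -> Prop) -> (R -> Prop)) (N : R -> Prop) : Prop :=
  hyperideal N /\ proper N /\
  forall a b, N (mul a b) -> N a \/ delta N b.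

End Notions.

Arguments hyperideal {R}. Arguments proper {R}. Arguments is_empty {R}.
Arguments hred {R}. Arguments hexp {R}.
Arguments phi_delta_primary {R}. Arguments delta_primary {R}.

Section Product.
Variables R1 R2 : KHR.

Definition p_hadd (a b c : R1 * R2) : Prop :=
  hadd (fst a) (fst b) (fst c) /\ hadd (snd a) (snd b) (snd c).
Definition p_neg (a : R1 * R2) : R1 * R2 := (neg (fst a), neg (snd a)).
Definition p_mul (a b : R1 * R2) : R1 * R2 := (mul (fst a) (fst b), mul (snd a) (snd b)).

Lemma p_nonempty : forall a b, exists c, p_hadd a b c.
Proof.
  intros [a1 a2] [b1 b2].
  destruct (hadd_nonempty a1 b1) as [c1 H1]; destruct (hadd_nonempty a2 b2) as [c2 H2].
  exists (c1, c2); split; assumption.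
Qed.

Lemma p_assoc : forall a b c x,
  (exists y, p_hadd a b y /\ p_hadd y c x) <-> (exists y, p_hadd b c y /\ p_hadd a y x).
Proof.
  intros [a1 a2] [b1 b2] [c1 c2] [x1 x2]; unfold p_hadd; simpl; split.
  - intros [[y1 y2] [[H1 H2] [H3 H4]]]; simpl in *.
    destruct (proj1 (@hadd_assoc R1 a1 b1 c1 x1) (ex_intro _ y1 (conj H1 H3))) as [z1 [Z1 Z1']].
    destruct (proj1 (@hadd_assoc R2 a2 b2 c2 x2) (ex_intro _ y2 (conj H2 H4))) as [z2 [Z2 Z2']].
    exists (z1, z2); simpl; tauto.
  - intros [[y1 y2] [[H1 H2] [H3 H4]]]; simpl in *.
    destruct (proj2 (@hadd_assoc R1 a1 b1 c1 x1) (ex_intro _ y1 (conj H1 H3))) as [z1 [Z1 Z1']].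
    destruct (proj2 (@hadd_assoc R2 a2 b2 c2 x2) (ex_intro _ y2 (conj H2 H4))) as [z2 [Z2 Z2']].
    exists (z1, z2); simpl; tauto.
Qed.

Lemma p_comm : forall a b c, p_hadd a b c <-> p_hadd b a c.
Proof.
  intros a b c; unfold p_hadd.
  rewrite (@hadd_comm R1 (fst a)), (@hadd_comm R2 (snd a)); tauto.
Qed.

Lemma p_zero : forall a c, p_hadd (zero, zero) a c <-> c = a.
Proof.
  intros [a1 a2] [c1 c2]; unfold p_hadd; simpl.
  rewrite (@hadd_zero R1), (@hadd_zero R2); split.
  - intros [-> ->]; reflexivity.
  - intros H; inversion H; auto.
Qed.

Lemma p_negP : forall a, p_hadd a (p_neg a) (zero, zero).
Proof. intros a; split; apply hadd_neg. Qed.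

Lemma p_neg_unique : forall a b, p_hadd a b (zero, zero) -> b = p_neg a.
Proof.
  intros [a1 a2] [b1 b2] [H1 H2]; simpl in *; unfold p_neg; simpl.
  rewrite (neg_unique _ _ H1), (neg_unique _ _ H2); reflexivity.
Qed.

Lemma p_rev : forall a b c, p_hadd a b c -> p_hadd (p_neg a) c b.
Proof. intros a b c [H1 H2]; split; apply hadd_rev; assumption. Qed.

Lemma p_mul_assoc : forall a b c, p_mul a (p_mul b c) = p_mul (p_mul a b) c.
Proof. intros; unfold p_mul; simpl; rewrite !mul_assoc; reflexivity. Qed.

Lemma p_mul_comm : forall a b, p_mul a b = p_mul b a.
Proof. intros; unfold p_mul; rewrite (@mul_comm R1 (fst a)), (@mul_comm R2 (snd a)); reflexivity. Qed.

Lemma p_mul_one : forall a, p_mul (one, one) a = a.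
Proof. intros [a1 a2]; unfold p_mul; simpl; rewrite !mul_one; reflexivity. Qed.

Lemma p_one_neq_zero : ((one, one) : R1 * R2) <> (zero, zero).
Proof. intros H; inversion H; apply (@one_neq_zero R1); assumption. Qed.

Lemma p_mul_zero : forall a, p_mul (zero, zero) a = (zero, zero).
Proof. intros a; unfold p_mul; simpl; rewrite !mul_zero; reflexivity. Qed.

Lemma p_distr : forall a b c x,
  (exists y, p_hadd b c y /\ x = p_mul a y) <-> p_hadd (p_mul a b) (p_mul a c) x.
Proof.
  intros [a1 a2] [b1 b2] [c1 c2] [x1 x2]; unfold p_hadd, p_mul; simpl; split.
  - intros [[y1 y2] [[H1 H2] E]]; simpl in *; inversion E; subst.
    split; apply (@mul_distr _ a1 b1 c1 _) || apply (@mul_distr _ a2 b2 c2 _); eauto.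
  - intros [H1 H2].
    destruct (proj2 (@mul_distr R1 a1 b1 c1 x1) H1) as [y1 [Y1 ->]].
    destruct (proj2 (@mul_distr R2 a2 b2 c2 x2) H2) as [y2 [Y2 ->]].
    exists (y1, y2); simpl; auto.
Qed.

Definition prodKHR : KHR :=
  {| car := R1 * R2; hadd := p_hadd; zero := (zero, zero); one := (one, one);
     neg := p_neg; mul := p_mul;
     hadd_nonempty := p_nonempty; hadd_assoc := p_assoc; hadd_comm := p_comm;
     hadd_zero := p_zero; hadd_neg := p_negP; neg_unique := p_neg_unique;
     hadd_rev := p_rev; mul_assoc := p_mul_assoc; mul_comm := p_mul_comm;
     mul_one := p_mul_one; one_neq_zero := p_one_neq_zero; mul_zero := p_mul_zero;
     mul_distr := p_distr |}.

End Product.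


Set Implicit Arguments.
Unset Strict Implicit.

(* In R1 × R2 the condition a∘b ∈ N1 × R2 only involves the first coordinates,
   and for an expansion γ2 we have γ2(R2) = R2, so δ(N1 × R2) = γ1(N1) × R2;
   if moreover φ(N1 × R2) ⊇ φ'(N1) × R2, any φ'-γ1-primary N1 gives a φ-δ-primary
   N1 × R2. Case (iv) takes φ' = φ1 (using φ2(R2) = R2), case (ii) takes φ' = ∅,
   since δ-primary means φ-δ-primary for every φ. In case (i) φ(N) = N, so the
   defining implication is vacuous. *)

Lemma hyperideal_setT (R : KHR) : @hyperideal R setT.
Proof. split; [exists zero; exact I | split; intros; exact I]. Qed.

Lemma hyperideal_setX (R1 R2 : KHR) (N1 : R1 -> Prop) (N2 : R2 -> Prop) :
  hyperideal N1 -> hyperideal N2 -> @hyperideal (prodKHR R1 R2) (setX N1 N2).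
Proof.
  intros [[x1 H1] [A1 M1]] [[x2 H2] [A2 M2]]; split; [|split].
  - exists (x1, x2); split; assumption.
  - intros [a1 a2] [b1 b2] [c1 c2] [Ha1 Ha2] [Hb1 Hb2] [Hc1 Hc2]; simpl in *.
    split; simpl; eauto.
  - intros [r1 r2] [a1 a2] [Ha1 Ha2]; simpl in *; split; simpl; auto.
Qed.

Lemma proper_setX_l (R1 R2 : KHR) (N1 : R1 -> Prop) (N2 : R2 -> Prop) :
  proper N1 -> @proper (prodKHR R1 R2) (setX N1 N2).
Proof. intros [x Hx]; exists (x, zero); intros [H _]; exact (Hx H). Qed.

Lemma proper_setX_r (R1 R2 : KHR) (N1 : R1 -> Prop) (N2 : R2 -> Prop) :
  proper N2 -> @proper (prodKHR R1 R2) (setX N1 N2).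
Proof. intros [x Hx]; exists (zero, x); intros [_ H]; exact (Hx H). Qed.

Lemma hexp_setT (R : KHR) (gam : (R -> Prop) -> (R -> Prop)) :
  hexp gam -> set_eq (gam setT) setT.
Proof.
  intros [_ [Hext _]] x; split; [intros _; exact I |].
  apply Hext, hyperideal_setT.
Qed.

Lemma delta_primary_phi_delta_primary (R : KHR) (phi delta : (R -> Prop) -> (R -> Prop))
    (N : R -> Prop) :
  delta_primary delta N -> phi_delta_primary phi delta N.
Proof. intros [HN [Hp P]]; split; [exact HN | split; [exact Hp |]]; auto. Qed.

Lemma phi_delta_primary_of_subset_phi (R : KHR) (phi delta : (R -> Prop) -> (R -> Prop))
    (N : R -> Prop) :
  hyperideal N -> proper N -> subset N (phi N) -> phi_delta_primary phi delta N.
Proof.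
  intros HN Hp Hsub; split; [exact HN | split; [exact Hp |]].
  intros a b Hab Hn; exfalso; exact (Hn (Hsub _ Hab)).
Qed.

Section ProductPrimary.

Variables (R1 R2 : KHR).
Variables (gam1 : (R1 -> Prop) -> (R1 -> Prop)) (gam2 : (R2 -> Prop) -> (R2 -> Prop)).
Hypotheses (Hgam1 : hexp gam1) (Hgam2 : hexp gam2).
Variables phi delta : (prodKHR R1 R2 -> Prop) -> (prodKHR R1 R2 -> Prop).
Hypothesis Hdelta : forall N1 N2, hyperideal N1 -> hyperideal N2 ->
  set_eq (delta (setX N1 N2)) (setX (gam1 N1) (gam2 N2)).

Lemma phi_delta_primary_setXT (phi1 : (R1 -> Prop) -> (R1 -> Prop)) (N1 : R1 -> Prop) :
  phi_delta_primary phi1 gam1 N1 ->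
  subset (setX (phi1 N1) setT) (phi (setX N1 setT)) ->
  phi_delta_primary phi delta (setX N1 setT).
Proof.
  intros [HN1 [Hp1 P]] Hphi.
  split; [apply hyperideal_setX; [exact HN1 | apply hyperideal_setT] |].
  split; [apply proper_setX_l, Hp1 |].
  intros [a1 a2] [b1 b2] [Hab _] Hn; simpl in *.
  destruct (P a1 b1 Hab) as [Ha | Hb].
  - intro H; apply Hn, Hphi; split; [exact H | exact I].
  - left; split; [exact Ha | exact I].
  - right; apply (Hdelta HN1 (hyperideal_setT R2)).
    split; [exact Hb | apply (hexp_setT Hgam2); exact I].
Qed.

Lemma phi_delta_primary_setTX (phi2 : (R2 -> Prop) -> (R2 -> Prop)) (N2 : R2 -> Prop) :
  phi_delta_primary phi2 gam2 N2 ->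
  subset (setX setT (phi2 N2)) (phi (setX setT N2)) ->
  phi_delta_primary phi delta (setX setT N2).
Proof.
  intros [HN2 [Hp2 P]] Hphi.
  split; [apply hyperideal_setX; [apply hyperideal_setT | exact HN2] |].
  split; [apply proper_setX_r, Hp2 |].
  intros [a1 a2] [b1 b2] [_ Hab] Hn; simpl in *.
  destruct (P a2 b2 Hab) as [Ha | Hb].
  - intro H; apply Hn, Hphi; split; [exact I | exact H].
  - left; split; [exact I | exact Ha].
  - right; apply (Hdelta (hyperideal_setT R1) HN2).
    split; [apply (hexp_setT Hgam1); exact I | exact Hb].
Qed.

End ProductPrimary.

Theorem mainTheorem5 (R1 R2 : KHR)
  (phi1 gam1 : (R1 -> Prop) -> (R1 -> Prop))
  (phi2 gam2 : (R2 -> Prop) -> (R2 -> Prop))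
  (Hphi1 : hred phi1) (Hgam1 : hexp gam1)
  (Hphi2 : hred phi2) (Hgam2 : hexp gam2)
  (phi delta : (prodKHR R1 R2 -> Prop) -> (prodKHR R1 R2 -> Prop))
  (Hphi : forall N1 N2, hyperideal N1 -> hyperideal N2 ->
            set_eq (phi (setX N1 N2)) (setX (phi1 N1) (phi2 N2)))
  (Hdelta : forall N1 N2, hyperideal N1 -> hyperideal N2 ->
            set_eq (delta (setX N1 N2)) (setX (gam1 N1) (gam2 N2))) :
  (* (i) *)
  (forall (N1 : R1 -> Prop) (N2 : R2 -> Prop),
      hyperideal N1 -> proper N1 -> hyperideal N2 -> proper N2 ->
      set_eq (phi1 N1) N1 -> set_eq (phi2 N2) N2 ->
      phi_delta_primary phi delta (setX N1 N2)) /\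
  (* (ii) *)
  (forall N1 : R1 -> Prop, delta_primary gam1 N1 ->
      phi_delta_primary phi delta (setX N1 setT)) /\
  (* (iii) *)
  (forall N2 : R2 -> Prop, delta_primary gam2 N2 ->
      phi_delta_primary phi delta (setX setT N2)) /\
  (* (iv) *)
  (forall N1 : R1 -> Prop, phi_delta_primary phi1 gam1 N1 -> set_eq (phi2 setT) setT ->
      phi_delta_primary phi delta (setX N1 setT)) /\
  (* (v) *)
  (forall N2 : R2 -> Prop, phi_delta_primary phi2 gam2 N2 -> set_eq (phi1 setT) setT ->
      phi_delta_primary phi delta (setX setT N2)).
Proof.
  pose proof (hyperideal_setT R1) as HT1; pose proof (hyperideal_setT R2) as HT2.
  split; [|split; [|split; [|split]]].
  - intros N1 N2 HN1 Hp1 HN2 _ E1 E2.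
    apply phi_delta_primary_of_subset_phi;
      [apply hyperideal_setX; assumption | apply proper_setX_l, Hp1 |].
    intros x [x1 x2]; apply (Hphi _ _ HN1 HN2); split; [apply E1 | apply E2]; assumption.
  - intros N1 HN1; apply (phi_delta_primary_setXT (phi1 := fun _ _ => False) Hgam2 Hdelta).
    + apply delta_primary_phi_delta_primary, HN1.
    + intros x [[] _].
  - intros N2 HN2; apply (phi_delta_primary_setTX (phi2 := fun _ _ => False) Hgam1 Hdelta).
    + apply delta_primary_phi_delta_primary, HN2.
    + intros x [_ []].
  - intros N1 HN1 E2; apply (phi_delta_primary_setXT Hgam2 Hdelta HN1).
    intros x [x1 _]; apply (Hphi _ _ (proj1 HN1) HT2); split; [exact x1 | apply E2; exact I].
  - intros N2 HN2 E1; apply (phi_delta_primary_setTX Hgam1 Hdelta HN2).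
    intros x [_ x2]; apply (Hphi _ _ HT1 (proj1 HN2)); split; [apply E1; exact I | exact x2].
Qed.
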